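(* Let $\mathcal{X}$ be a nonempty closed domain set whose closed convex hull $\operatorname{clconv}(\mathcal{X})$ contains no line, and let $0\le \tilde m\le m$ be integers. The following are equivalent: (a) (Inclusive face) every face $F$ of $\operatorname{clconv}(\mathcal{X})$ of dimension at most $\tilde m$ satisfies $F\subseteq\mathcal{X}$, i.e. $F\subseteq \mathcal{X}$ for all $F\in\mathcal{F}^{\tilde m}(\operatorname{clconv}(\mathcal{X}))$; (b) (Extreme point exactness) for every choice of $m$ LMIs of dimension $\tilde m$, every extreme point of $\mathcal{C}_{\mathrm{rel}}$ belongs to $\mathcal{C}$, i.e. $\operatorname{ext}(\mathcal{C}_{\mathrm{rel}})\subseteq\mathcal{C}$.
   Context: Let $\mathcal{Q}$ be one of the matrix spaces $\mathbb{S}^n_+$ (positive semidefinite $n\times n$ matrices), $\mathbb{S}^n$ (symmetric $n\times n$ matrices) or $\mathbb{R}^{n\times p}$, where $k\le n\le p$ are positive integers; matrices are paired by the trace inner product $\langle A,X\rangle=\operatorname{tr}(A^\top X)$. A domain set is a set of the form $\mathcal{X}=\{X\in\mathcal{Q}:\operatorname{rank}(X)\le k,\ F_j(X)\le 0\ \forall j\in[t]\}$ with each $F_j:\mathcal{Q}\to\mathbb{R}$ continuous (possibly nonconvex). $\operatorname{clconv}$ denotes the closed convex hull. A system of $m$ LMIs is given by matrices $A_1,\dots,A_m$ (of the same size as elements of $\mathcal{Q}$, possibly non-symmetric) and bounds $-\infty\le b_i^l\le b_i^u\le+\infty$; its dimension $\tilde m$ is the dimension of the linear span of $A_1,\dots,A_m$.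 For such a system put $\mathcal{C}=\{X\in\mathcal{X}: b_i^l\le\langle A_i,X\rangle\le b_i^u\ \forall i\in[m]\}$ and $\mathcal{C}_{\mathrm{rel}}=\{X\in\operatorname{clconv}(\mathcal{X}): b_i^l\le\langle A_i,X\rangle\le b_i^u\ \forall i\in[m]\}$. A face of a closed convex set $D$ is a convex subset $F\subseteq D$ such that whenever a segment $[a,b]\subseteq D$ has $(a,b)\cap F\neq\emptyset$ then $[a,b]\subseteq F$; its dimension is that of its affine hull. $\mathcal{F}^d(D)$ denotes the collection of faces of $D$ of dimension at most $d$; $\operatorname{ext}(D)$ is the set of extreme points of $D$. *)

From HB Require Import structures.
From mathcomp Require Import all_boot all_order all_algebra.
From mathcomp Require Import all_classical all_reals all_analysis.
Set Implicit Arguments. Unset Strict Implicit. Unset Printing Implicit Defensive.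
Import Order.TTheory GRing.Theory Num.Theory.
Import numFieldNormedType.Exports.
Local Open Scope classical_set_scope.
Local Open Scope ring_scope.

Section Defs.
Variables (R : realType) (n p : nat).
Notation M := 'M[R]_(n, p).

Definition tip (A X : M) : R := \tr (A^T *m X).

Definition symmx (X : M) : Prop :=
  n = p /\ forall (i i' : 'I_n) (j j' : 'I_p),
    val i = val j' -> val j = val i' -> X i j = X i' j'.

Definition Rect_space : set M := setT.
Definition Sym_space : set M := [set X | symmx X].
Definition PSD_space : set M :=
  [set X | symmx X /\ forall v : nat -> R,
     0 <= \sum_(i < n) \sum_(j < p) v (val i) * X i j * v (val j)].

Definition domain_set (Q : set M) (k t : nat) (F : 'I_t -> M -> R) : set M :=
  [set X | Q X /\ (\rank X <= k)%N /\ forall j, F j X <= 0].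

Definition conv (S : set M) : set M :=
  [set X | exists (N : nat) (w : 'I_N -> R) (x : 'I_N -> M),
     (forall i, 0 <= w i) /\ \sum_(i < N) w i = 1 /\ (forall i, S (x i)) /\
     X = \sum_(i < N) w i *: x i].

Definition clconv (S : set M) : set M := closure (conv S).

Definition segment (a b : M) : set M :=
  [set (1 - s) *: a + s *: b | s in `[0, 1]%classic].
Definition open_segment (a b : M) : set M :=
  [set (1 - s) *: a + s *: b | s in `]0, 1[%classic].

Definition convex_set (S : set M) : Prop :=
  forall a b, S a -> S b -> segment a b `<=` S.

Definition face (D F : set M) : Prop :=
  convex_set F /\ F `<=` D /\
  forall a b, segment a b `<=` D -> open_segment a b `&` F !=set0 ->
     segment a b `<=` F.

(* dimension of the affine hull of S is at most d (the empty set has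
   dimension -1) *)
Definition affdim_le (S : set M) (d : nat) : Prop :=
  S = set0 \/ exists x0, S x0 /\ exists v : 'I_d -> M,
     forall x, S x -> exists c : 'I_d -> R, x - x0 = \sum_(i < d) c i *: v i.

Definition faces_le (D : set M) (d : nat) : set (set M) :=
  [set F | face D F /\ affdim_le F d].

Definition extreme_point (D : set M) (x : M) : Prop :=
  D x /\ forall a b, D a -> D b -> open_segment a b x -> a = b.

Definition contains_no_line (D : set M) : Prop :=
  ~ exists x d : M, d != 0 /\ forall s : R, D (x + s *: d).

Definition lmi_dim (m : nat) (A : 'I_m -> M) : nat :=
  \rank (\matrix_(i < m) mxvec (A i)).

Definition lmi_cut (m : nat) (A : 'I_m -> M) (bl bu : 'I_m -> \bar R)
  (S : set M) : set M :=
  [set X | S X /\ forall i, (bl i <= (tip (A i) X)%:E)%E /\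
                            ((tip (A i) X)%:E <= bu i)%E].

End Defs.

(* Only the convexity of D := clconv X is used.  They form a subspace, and y - x ranges over
   it exactly on a face of D through x.  Extremality makes this subspace meet
   the common kernel of the <A_i, .> trivially, so the face has dimension at
   most rank (A_i) = m~ and lies in X by (a).
   (b) => (a): if the face G has its directions in the span of m~ matrices,
   choose A_1, ..., A_m of span dimension m~ that are injective on that span
   and fix <A_i, X> = <A_i, y> for y in G; any segment of the cut through y
   lies in G, hence is a point, so y is an extreme point of the cut and lies
   in X by (b). *)
Set Warnings "-notation-overridden -ambiguous-paths -notation-incompatible-prefix".
From Pilot Require Import Defs.
From HB Require Import structures.
From mathcomp Require Import all_boot all_order all_algebra.
From mathcomp Require Import all_classical all_reals all_analysis.
From mathcomp Require Import ring lra.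
Import Order.TTheory GRing.Theory Num.Theory.
Import numFieldNormedType.Exports.
Set Implicit Arguments. Unset Strict Implicit. Unset Printing Implicit Defensive.
Local Open Scope classical_set_scope.
Local Open Scope ring_scope.

Definition subspace_set {F : pzRingType} {V : lmodType F} (S : set V) : Prop :=
  [/\ S 0, forall u v, S u -> S v -> S (u + v) & forall a u, S u -> S (a *: u)].

Section RowSpaces.
Variable F : fieldType.

Lemma row_space_in_rows k a N (T : 'M[F]_(a, N)) :
  (\rank T <= k)%N -> exists T' : 'M[F]_(k, N), (T' == T)%MS.
Proof.
move=> rTk; exists (pid_mx (\rank T) *m row_ebase T).
have /andP[baseT Tbase] : (row_base T == T)%MS by apply/eqmxP; exact: eq_row_base.
apply/andP; split.
  apply: submx_trans baseT; rewrite /row_base.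
  by rewrite -(@pid_mx_id F k (\rank T) N _ (leqnn _)) -mulmxA submxMl.
apply: submx_trans Tbase _; rewrite /row_base.
by rewrite -(@pid_mx_id F (\rank T) k N _ rTk) -mulmxA submxMl.
Qed.

Lemma extend_to_rank r m a N (V : 'M[F]_(a, N)) :
  (\rank V <= r)%N -> (r <= m)%N -> (r <= N)%N ->
  exists B : 'M[F]_(m, N), \rank B = r /\ (V <= B)%MS.
Proof.
move=> rVr rm rN.
pose E := pid_mx (r - \rank V) *m row_base (V^C)%MS : 'M[F]_(r - \rank V, N).
have rE : \rank E = (r - \rank V)%N.
  by rewrite mxrankMfree ?row_base_free // rank_pid_mx // mxrank_compl leq_sub2r.
have VE0 : (V :&: E)%MS = 0.
  apply/eqP; rewrite -submx0 -(capmx_compl V) capmxS //.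
  by rewrite (submx_trans (submxMl _ _)) ?eq_row_base.
have rVE : \rank (V + E)%MS = r by rewrite mxrank_disjoint_sum // rE subnKC.
have [B eqB] : exists B : 'M[F]_(m, N), (B == V + E)%MS.
  by apply: row_space_in_rows; rewrite rVE.
exists B; split; first by rewrite (eqmx_rank eqB).
by rewrite (eqmxP eqB) addsmxSl.
Qed.

Lemma subspace_row_space N (S : set 'rV[F]_N) :
  subspace_set S -> exists U : 'M[F]_N, forall u, S u <-> (u <= U)%MS.
Proof.
move=> [S0 SD SZ].
pose spans (U : 'M[F]_N) := forall u : 'rV_N, (u <= U)%MS -> S u.
pose P r := `[< exists U, spans U /\ \rank U = r >].
have P0 : exists r, P r.
  exists 0%N; apply/asboolP; exists 0; split; last exact: mxrank0.
  by move=> u; rewrite submx0 => /eqP ->.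
have Pbound r : P r -> (r <= N)%N.
  by move=> /asboolP [U [_ <-]]; exact: rank_leq_col.
case: (ex_maxnP P0 Pbound) => r /asboolP [U [spU rU]] maxr.
exists U => u; split; last exact: spU.
move=> Su; apply: contrapT => /negP Uu.
have spUu : spans (U + u)%MS.
  move=> w /sub_addsmxP [[x y] /= ->].
  apply: SD; first by apply: spU; rewrite submxMl.
  by rewrite [y]mx11_scalar mul_scalar_mx; apply: SZ.
have : (\rank (U + u)%MS <= r)%N by apply: maxr; apply/asboolP; exists (U + u)%MS.
apply/negP; rewrite -ltnNge -rU; apply: rank_ltmx.
by rewrite ltmxE addsmxSl; apply: contra Uu; apply: submx_trans (addsmxSr _ _).
Qed.

Lemma rank_le_of_capmx_kermx0 a b N (U : 'M[F]_(a, N)) (B : 'M[F]_(N, b)) :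
  (U :&: kermx B)%MS = 0 -> (\rank U <= \rank B)%N.
Proof.
move=> UK0; have := rank_leq_col (U + kermx B)%MS.
rewrite mxrank_disjoint_sum // mxrank_ker => h.
by rewrite -(leq_add2r (N - \rank B)) subnKC ?rank_leq_row.
Qed.

End RowSpaces.

Lemma sub_rowspace_orthogonal_eq0 (R : realFieldType) m N (u : 'rV[R]_N)
    (B : 'M[R]_(m, N)) :
  (u <= B)%MS -> u *m B^T = 0 -> u = 0.
Proof.
case/submxP=> w -> uB0; set v := w *m B.
have /matrixP/(_ 0 0) : v *m v^T = 0 by rewrite trmx_mul mulmxA uB0 mul0mx.
rewrite !mxE; under eq_bigr do rewrite [v^T _ _]mxE -expr2.
move=> /eqP; rewrite psumr_eq0 => [/allP v0|i _]; last exact: sqr_ge0.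
apply/rowP=> j; have /implyP/(_ isT) := v0 j (mem_index_enum j).
by rewrite sqrf_eq0 => /eqP ->; rewrite mxE.
Qed.

Section MatrixSpace.
Variables (R : realType) (n p : nat).
Notation M := 'M[R]_(n, p).

Lemma tip_mxvec (A X : M) : tip A X = (mxvec X *m (mxvec A)^T) 0 0.
Proof.
rewrite /tip /mxtrace; under eq_bigr do rewrite mxE.
rewrite exchange_big pair_bigA [RHS]mxE (reindex _ (curry_mxvec_bij _ _)) /=.
by apply: eq_bigr => -[i j] _; rewrite !mxE !mxvecE mulrC.
Qed.

Lemma lmi_row m (A : 'I_m -> M) (X : M) :
  mxvec X *m (\matrix_(i < m) mxvec (A i))^T = \row_i tip (A i) X.
Proof.
apply/rowP=> i; rewrite !mxE tip_mxvec mxE; apply: eq_bigr => k _.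
by rewrite !mxE.
Qed.

Lemma tipDZ (A X Y : M) c : tip A (X + c *: Y) = tip A X + c * tip A Y.
Proof. by rewrite /tip mulmxDr -scalemxAr mxtraceD mxtraceZ. Qed.

Lemma subspace_lmi_span m d (A : 'I_m -> M) (S : set M) :
  subspace_set S -> (lmi_dim A <= d)%N ->
  (forall X, S X -> (forall i, tip (A i) X = 0) -> X = 0) ->
  exists v : 'I_d -> M,
    forall X, S X -> exists c : 'I_d -> R, X = \sum_j c j *: v j.
Proof.
move=> [S0 SD SZ] rAd Sinj; set Amat := \matrix_(i < m) mxvec (A i).
have [|U SU] := @subspace_row_space _ _ (fun u => S (vec_mx u)).
  split=> [|u w Su Sw|a u Su]; rewrite ?linear0 ?linearD ?linearZ //.
    exact: SD.
  exact: SZ.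
have UK0 : (U :&: kermx Amat^T)%MS = 0.
  apply/eqP/rowV0P => u uUK.
  have /SU Su := submx_trans uUK (capmxSl _ _).
  have /sub_kermxP uA0 := submx_trans uUK (capmxSr _ _).
  rewrite -[u]vec_mxK (Sinj _ Su) ?linear0 // => i.
  by move/rowP: uA0 => /(_ i); rewrite -{1}[u]vec_mxK lmi_row !mxE.
have rUd : (\rank U <= d)%N.
  apply: leq_trans rAd; rewrite /lmi_dim -/Amat -(mxrank_tr Amat).
  exact: rank_le_of_capmx_kermx0.
have [D /eqmxP eqDU] := row_space_in_rows rUd.
exists (fun j => vec_mx (row j D)) => X SX.
have : (mxvec X <= D)%MS by rewrite eqDU -SU mxvecK.
case/submxP => w Xw; exists (fun j => w 0 j).
by rewrite -[X]mxvecK Xw mulmx_sum_row linear_sum; under eq_bigr do rewrite linearZ.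
Qed.

Lemma lmi_injective_on_span m d (v : 'I_d -> M) :
  (d <= m)%N -> (d <= n * p)%N ->
  exists A : 'I_m -> M, lmi_dim A = d /\
   forall c : 'I_d -> R, (forall i, tip (A i) (\sum_j c j *: v j) = 0) ->
     \sum_j c j *: v j = 0.
Proof.
move=> dm dN; set V := \matrix_(j < d) mxvec (v j).
have [B [rB VB]] := extend_to_rank (rank_leq_row V) dm dN.
have eB : \matrix_(i < m) mxvec (vec_mx (row i B)) = B.
  by apply/matrixP => i j; rewrite mxE vec_mxK mxE.
exists (fun i => vec_mx (row i B)); split; first by rewrite /lmi_dim eB.
move=> c Ac0; set Y := \sum_j c j *: v j.
have YV : mxvec Y = \row_j c j *m V.
  rewrite mulmx_sum_row /Y linear_sum; apply: eq_bigr => j _.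
  by rewrite linearZ rowK mxE.
suff Y0 : mxvec Y = 0 by rewrite -[Y]mxvecK Y0 linear0.
apply: sub_rowspace_orthogonal_eq0 (_ : (mxvec Y <= B)%MS) _.
  by rewrite YV (submx_trans (submxMl _ _) VB).
by rewrite -eB lmi_row; apply/rowP => i; rewrite !mxE Ac0.
Qed.

Lemma segment_pt (a b : M) s :
  0 <= s -> s <= 1 -> Defs.segment a b ((1 - s) *: a + s *: b).
Proof. by move=> s0 s1; exists s => //=; rewrite in_itv /= s0 s1. Qed.

Lemma segment_left (a b : M) : Defs.segment a b a.
Proof.
by have := @segment_pt a b 0 (lexx _) ler01; rewrite subr0 scale1r scale0r addr0.
Qed.

Lemma segment_right (a b : M) : Defs.segment a b b.
Proof.
by have := @segment_pt a b 1 ler01 (lexx _); rewrite subrr scale0r scale1r add0r.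
Qed.

Lemma convex_comb (C : set M) a b s : Defs.convex_set C -> C a -> C b ->
  0 <= s -> s <= 1 -> C ((1 - s) *: a + s *: b).
Proof. by move=> cC Ca Cb s0 s1; apply: (cC a b Ca Cb); apply: segment_pt. Qed.

Lemma convex_conv (S : set M) : Defs.convex_set (Defs.conv S).
Proof.
move=> a b [N1 [w1 [x1 [w10 [w11 [Sx1 ->]]]]]] [N2 [w2 [x2 [w20 [w21 [Sx2 ->]]]]]].
move=> _ [s + <-]; rewrite /= in_itv /= => /andP[s0 s1].
have splitl j : fintype.split (lshift N2 j) = inl j := unsplitK (inl j).
have splitr j : fintype.split (rshift N1 j) = inr j := unsplitK (inr j).
exists (N1 + N2)%N.
exists (fun i => match fintype.split i with
                 | inl j => (1 - s) * w1 j | inr j => s * w2 j end).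
exists (fun i => match fintype.split i with inl j => x1 j | inr j => x2 j end).
split; first by move=> i; case: (fintype.split i) => j; rewrite mulr_ge0 ?subr_ge0.
split.
  rewrite big_split_ord /=; under eq_bigr do rewrite splitl.
  under [X in _ + X]eq_bigr do rewrite splitr.
  by rewrite -!mulr_sumr w11 w21 !mulr1 subrK.
split; first by move=> i; case: (fintype.split i).
rewrite big_split_ord /=; under [X in _ = X + _]eq_bigr do rewrite splitl.
under [X in _ = _ + X]eq_bigr do rewrite splitr.
by rewrite !scaler_sumr; congr (_ + _); apply: eq_bigr => i _; rewrite scalerA.
Qed.

Lemma convex_closure (C : set M) : Defs.convex_set C -> Defs.convex_set (closure C).
Proof.
move=> cC a b ca cb _ [s + <-]; rewrite /= in_itv /= => /andP[s0 s1].
move=> B /nbhs_ballP [e e0 sB].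
have [a' [Ca' aa']] := ca _ (nbhsx_ballx a e e0).
have [b' [Cb' bb']] := cb _ (nbhsx_ballx b e e0).
exists ((1 - s) *: a' + s *: b'); split; first exact: convex_comb.
apply: sB; move: aa' bb'; rewrite -ball_normE /= => ha hb.
have -> : (1 - s) *: a + s *: b - ((1 - s) *: a' + s *: b') =
    (1 - s) *: (a - a') + s *: (b - b').
  by rewrite !scalerBr opprD !addrA; congr (_ - _); rewrite addrAC.
apply: le_lt_trans (ler_normD _ _) _; rewrite !normrZ (ger0_norm s0).
rewrite ger0_norm ?subr_ge0 //.
have [->|s_neq0] := eqVneq s 0; first by rewrite subr0 !mul1r mul0r addr0.
have s_gt0 : 0 < s by rewrite lt_neqAle eq_sym s_neq0.
nra.
Qed.

Definition twoway_dirs (D : set M) (x : M) : set M :=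
  [set d | exists2 e, 0 < e & forall s, `|s| <= e -> D (x + s *: d)].

(* The smallest face of D containing x. *)
Definition face_at (D : set M) (x : M) : set M :=
  [set y | D y /\ twoway_dirs D x (y - x)].

Lemma subspace_twoway_dirs D x : Defs.convex_set D -> D x ->
  subspace_set (twoway_dirs D x).
Proof.
move=> cD Dx; have dir0 : twoway_dirs D x 0.
  by exists 1 => // s _; rewrite scaler0 addr0.
split=> // [u v [e1 e1_gt0 Du] [e2 e2_gt0 Dv] | c u [e e_gt0 Du]].
  set e := Num.min e1 e2; have e_gt0 : 0 < e by rewrite lt_min e1_gt0.
  exists (e / 2) => [|s s_le]; first by rewrite divr_gt0.
  have : `|2 * s| <= e by rewrite normrM ger0_norm // mulrC -ler_pdivlMr.
  rewrite le_min => /andP[s2e1 s2e2].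
  have := convex_comb cD (Du _ s2e1) (Dv _ s2e2) (_ : 0 <= 1 / 2) (_ : 1 / 2 <= 1).
  have -> : (1 - 1 / 2) *: (x + (2 * s) *: u) + 1 / 2 *: (x + (2 * s) *: v) =
      x + s *: (u + v) by apply/matrixP => i j; rewrite !mxE; field.
  by apply; lra.
have [->|c_neq0] := eqVneq c 0; first by rewrite scale0r.
have c_gt0 : 0 < `|c| by rewrite normr_gt0.
exists (e / `|c|) => [|s s_le]; first exact: divr_gt0.
by rewrite scalerA; apply: Du; rewrite normrM -ler_pdivlMr.
Qed.

Lemma face_at_center D x : D x -> face_at D x x.
Proof.
by move=> Dx; split=> //; rewrite subrr; exists 1 => // s _; rewrite scaler0 addr0.
Qed.

Lemma twoway_dirs_segment D x a b z :
  Defs.convex_set D -> Defs.segment a b `<=` D ->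
  open_segment a b z -> twoway_dirs D x (z - x) -> twoway_dirs D x (b - a).
Proof.
move=> cD abD [s + zE] [e e_gt0 De]; rewrite /= in_itv /= => /andP[s_gt0 s_lt1].
pose beta := e / (1 + e); pose mu := s * (1 - s).
have beta_gt0 : 0 < beta by rewrite divr_gt0 //; lra.
have beta_le1 : beta <= 1 by rewrite ler_pdivrMr; lra.
have mu_gt0 : 0 < mu by rewrite mulr_gt0 // subr_gt0.
exists (beta * mu) => [|t t_le]; first exact: mulr_gt0.
(* x + t (b - a) is the beta-combination of the point x - e (z - x) beyond x
   and of z + (t / beta) (b - a), which stays on [a, b] since |t / beta| <= mu. *)
pose del := t / beta.
have : `|del| <= mu.
  by rewrite normrM normfV (gtr0_norm beta_gt0) ler_pdivrMr // mulrC.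
rewrite ler_norml => /andP[del_ge del_le].
have far : D (x + (- e) *: (z - x)) by apply: De; rewrite normrN gtr0_norm.
have near : D ((1 - (s + del)) *: a + (s + del) *: b).
  by apply: abD; apply: segment_pt; rewrite /mu in del_ge del_le; nra.
have := convex_comb cD far near (ltW beta_gt0) beta_le1.
suff -> : (1 - beta) *: (x + (- e) *: (z - x)) +
    beta *: ((1 - (s + del)) *: a + (s + del) *: b) = x + t *: (b - a) by [].
rewrite -zE; apply/matrixP => i j; rewrite !mxE /del /beta.
by field; rewrite !gt_eqF //; lra.
Qed.

Lemma face_face_at D x : Defs.convex_set D -> D x -> face D (face_at D x).
Proof.
move=> cD Dx; have [_ dirD dirZ] := subspace_twoway_dirs cD Dx.
split.
  move=> a b [Da da] [Db db] _ [s + <-]; rewrite /= in_itv /= => /andP[s0 s1].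
  split; first exact: convex_comb.
  have -> : (1 - s) *: a + s *: b - x = (1 - s) *: (a - x) + s *: (b - x).
    by apply/matrixP => i j; rewrite !mxE; ring.
  by apply: dirD; apply: dirZ.
split; first by move=> y [].
move=> a b abD [z [zab [_ dz]]] _ [u + <-]; rewrite /= in_itv /= => /andP[u0 u1].
have dba := twoway_dirs_segment cD abD zab dz.
split; first by apply: abD; exact: segment_pt.
case: zab => s _ zE.
have -> : (1 - u) *: a + u *: b - x = (z - x) + (u - s) *: (b - a).
  by rewrite -zE; apply/matrixP => i j; rewrite !mxE; ring.
exact: dirD dz (dirZ _ _ dba).
Qed.

Lemma extreme_lmi_cut_dirs_eq0 m (A : 'I_m -> M) bl bu D x :
  extreme_point (lmi_cut A bl bu D) x ->
  forall d, twoway_dirs D x d -> (forall i, tip (A i) d = 0) -> d = 0.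
Proof.
move=> [[_ cx] xext] d [e e_gt0 De] Ad0.
have cut s : `|s| <= e -> lmi_cut A bl bu D (x + s *: d).
  move=> s_le; split; first exact: De.
  by move=> i; rewrite tipDZ Ad0 mulr0 addr0; exact: cx.
have mid : open_segment (x + (- e) *: d) (x + e *: d) x.
  exists (1 / 2); first by rewrite /= in_itv /=; apply/andP; split; lra.
  by apply/matrixP => i j; rewrite !mxE; field.
have := xext _ _ (cut _ _) (cut _ _) mid.
rewrite normrN gtr0_norm // => /(_ (lexx _) (lexx _)) /addrI/eqP.
by rewrite -subr_eq0 -scalerBl scaler_eq0 => /orP[/eqP ?|/eqP //]; exfalso; lra.
Qed.

Lemma faces_le_face_at m d (A : 'I_m -> M) bl bu D x : Defs.convex_set D ->
  extreme_point (lmi_cut A bl bu D) x -> (lmi_dim A <= d)%N ->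
  faces_le D d (face_at D x).
Proof.
move=> cD xext rAd; have [[Dx _] _] := xext.
split; first exact: face_face_at.
have [v vspan] := subspace_lmi_span (subspace_twoway_dirs cD Dx) rAd
  (extreme_lmi_cut_dirs_eq0 xext).
right; exists x; split; first exact: face_at_center.
by exists v => y [_ /vspan].
Qed.

Lemma extreme_lmi_cut_of_face m d D G y :
  Defs.convex_set D -> faces_le D d G -> G y -> (d <= m)%N -> (d <= n * p)%N ->
  exists A : 'I_m -> M, lmi_dim A = d /\
    extreme_point
      (lmi_cut A (fun i => (tip (A i) y)%:E) (fun i => (tip (A i) y)%:E) D) y.
Proof.
move=> cD [[_ [GD Gface]] Gdim] Gy dm dN.
case: Gdim => [G0|[x0 [_ [v vspan]]]]; first by rewrite G0 in Gy.
have [A [rA Ainj]] := lmi_injective_on_span v dm dN.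
exists A; split => //; split; first by split; [exact: GD | move=> i; split].
move=> a b [Da ca] [Db cb] yab.
have abG := Gface a b (cD a b Da Db) (ex_intro _ y (conj yab Gy)).
have [c1 ea] := vspan a (abG a (segment_left a b)).
have [c2 eb] := vspan b (abG b (segment_right a b)).
have eab : a - b = \sum_j (c1 j - c2 j) *: v j.
  have -> : a - b = (a - x0) - (b - x0) by rewrite opprB addrA subrK.
  rewrite ea eb -sumrB.
  by apply: eq_bigr => j _; rewrite scalerBl.
have tip_y X i : (forall i, ((tip (A i) y)%:E <= (tip (A i) X)%:E)%E /\
    ((tip (A i) X)%:E <= (tip (A i) y)%:E)%E) -> tip (A i) X = tip (A i) y.
  by move=> /(_ i) [h1 h2]; apply/le_anti; rewrite -!lee_fin h1 h2.
apply/subr0_eq; rewrite eab; apply: Ainj => i; rewrite -eab -[- b]scaleN1r tipDZ.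
by rewrite (tip_y _ _ ca) (tip_y _ _ cb) mulN1r subrr.
Qed.

End MatrixSpace.

Theorem theorem1 (R : realType) (k n p : nat) (Q : set 'M[R]_(n, p))
  (t : nat) (F : 'I_t -> 'M[R]_(n, p) -> R) (m mt : nat) :
  (k <= n)%N -> (n <= p)%N ->
  (Q = @Rect_space R n p \/ (n = p /\ Q = @Sym_space R n p) \/
   (n = p /\ Q = @PSD_space R n p)) ->
  (forall j, {within Q, continuous F j}) ->
  domain_set Q k F !=set0 ->
  closed (domain_set Q k F) ->
  contains_no_line (clconv (domain_set Q k F)) ->
  (mt <= m)%N -> (mt <= n * p)%N ->
  ((forall G, faces_le (clconv (domain_set Q k F)) mt G ->
      G `<=` domain_set Q k F)
   <->
   (forall (A : 'I_m -> 'M[R]_(n, p)) (bl bu : 'I_m -> \bar R),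
      (forall i, (bl i <= bu i)%E) ->
      lmi_dim A = mt ->
      extreme_point (lmi_cut A bl bu (clconv (domain_set Q k F)))
        `<=` lmi_cut A bl bu (domain_set Q k F))).
Proof.
move=> _ _ _ _ _ _ _ mt_m mt_np; set X := domain_set Q k F.
have cD : Defs.convex_set (clconv X) by apply/convex_closure/convex_conv.
split=> [facesX A bl bu _ rA x xext | extX G GD y Gy].
  split; last by case: xext => -[].
  apply: facesX (faces_le_face_at cD xext (eq_leq rA)) _ _.
  by case: xext => -[Dx _] _; exact: face_at_center.
have [A [rA yext]] := extreme_lmi_cut_of_face cD GD Gy mt_m mt_np.
by have [] := extX A _ _ (fun=> lexx _) rA y yext.
Qed.
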